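(* For any commutative Noetherian local ring $R$, the smallest full subcategory of $\mathrm{mod}\,R$ containing $\mathcal E(R)$ and closed under direct summands is all of $\mathrm{mod}\,R$.
   Context: $\mathrm{mod}\,R$ is the category of finitely generated $R$-modules. $\underline{\mathrm{ann}}_R(M)=\mathrm{ann}_R\underline{\mathrm{End}}_R(M)$, where $\underline{\mathrm{End}}_R(M)$ is $\mathrm{End}_R(M)$ modulo endomorphisms factoring through a free module. $\mathrm{ARann}_R(M)=\bigcap_{i>0}\mathrm{ann}_R\mathrm{Ext}^i_R(M,M\oplus R)$. $\mathcal{E}(R)$ is the full subcategory of modules $M$ with $\underline{\mathrm{ann}}_R(M)=\mathrm{ARann}_R(M)$. *)

(* Modules over a commutative ring R are lmodType R;
   finitely generated free modules are row-vector spaces 'rV[R]_n. *)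
From HB Require Import structures.
From mathcomp Require Import all_boot all_order all_algebra.
Set Implicit Arguments. Unset Strict Implicit. Unset Printing Implicit Defensive.
Import GRing.Theory.
Local Open Scope ring_scope.

Definition is_ideal (R : comNzRingType) (I : R -> Prop) : Prop :=
  [/\ I 0, (forall x y, I x -> I y -> I (x + y)) & (forall r x, I x -> I (r * x))].

Definition ideal_fingen (R : comNzRingType) (I : R -> Prop) : Prop :=
  exists s : seq R, forall x,
    I x <-> exists c : 'I_(size s) -> R, x = \sum_(i < size s) c i * s`_i.

Definition noetherian_ring (R : comNzRingType) : Prop :=
  forall I : R -> Prop, is_ideal I -> ideal_fingen I.

Definition maximal_ideal (R : comNzRingType) (I : R -> Prop) : Prop :=
  [/\ is_ideal I, ~ I 1 &
      forall J : R -> Prop, is_ideal J -> (forall x, I x -> J x) -> ~ J 1 ->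
        forall x, J x -> I x].

Definition local_ring (R : comNzRingType) : Prop :=
  exists m : R -> Prop, maximal_ideal m /\
    forall m' : R -> Prop, maximal_ideal m' -> forall x, m' x <-> m x.

Definition mod_fingen (R : comNzRingType) (M : lmodType R) : Prop :=
  exists s : seq M, forall x : M,
    exists c : 'I_(size s) -> R, x = \sum_(i < size s) c i *: s`_i.

(* ---------- Stable endomorphism ring annihilator ----------
   r kills the class of f in End(M)/P(M,M) iff r f factors through a free
   module (for f.g. M, through a finitely generated free module 'rV_k). *)
Definition factors_through_free (R : comNzRingType) (M N : lmodType R)
    (g : M -> N) : Prop :=
  exists (k : nat) (a : {linear M -> 'rV[R]_k}) (b : {linear 'rV[R]_k -> N}),
    forall x, g x = b (a x).

Definition stable_ann (R : comNzRingType) (M : lmodType R) (r : R) : Prop :=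
  forall f : {linear M -> M}, factors_through_free (fun x => r *: f x).

(* ---------- Free resolutions and Ext annihilators ----------
   A finite-rank free resolution of M:
     ... -> R^(n 2) --D 1--> R^(n 1) --D 0--> R^(n 0) --e--> M -> 0
   (maps act on row vectors by right multiplication). *)
Definition free_resolution (R : comNzRingType) (M : lmodType R)
    (n : nat -> nat) (D : forall j, 'M[R]_(n j.+1, n j))
    (e : {linear 'rV[R]_(n 0) -> M}) : Prop :=
  [/\ (forall y : M, exists v, e v = y),
      (forall v : 'rV[R]_(n 0), e v = 0 <-> exists w, v = w *m D 0%N) &
      (forall j (v : 'rV[R]_(n j.+1)),
          v *m D j = 0 <-> exists w, v = w *m D j.+1)].

(* r annihilates Ext^(j+1)_R(M,N) = H^(j+1)(Hom_R(P,N)):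
   for each cocycle phi : P_(j+1) -> N, r phi is a coboundary. Ext does not
   depend on the resolution; we quantify over all resolutions. *)
Definition Ext_ann (R : comNzRingType) (M N : lmodType R) (j : nat) (r : R)
    : Prop :=
  forall (n : nat -> nat) (D : forall j, 'M[R]_(n j.+1, n j))
         (e : {linear 'rV[R]_(n 0) -> M}),
    free_resolution D e ->
    forall phi : {linear 'rV[R]_(n j.+1) -> N},
      (forall w : 'rV[R]_(n j.+2), phi (w *m D j.+1) = 0) ->
      exists psi : {linear 'rV[R]_(n j) -> N},
        forall v : 'rV[R]_(n j.+1), r *: phi v = psi (v *m D j).

(* ARann_R(M) = intersection over i > 0 of ann Ext^i(M, M (+) R) *)
Definition ARann (R : comNzRingType) (M : lmodType R) (r : R) : Prop :=
  forall j : nat, Ext_ann M (M * R^o)%type j r.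

Definition in_E (R : comNzRingType) (M : lmodType R) : Prop :=
  forall r : R, stable_ann M r <-> ARann M r.

Definition is_summand (R : comNzRingType) (M N : lmodType R) : Prop :=
  exists (i : {linear M -> N}) (p : {linear N -> M}), forall x, p (i x) = x.

(* Take a presentation 0 -> syz -> R^n -> M -> 0 and put N := M (+) syz, of
   which M is a direct summand.  Noetherianity makes N finitely generated and
   gives it a free resolution of finite ranks.
   If r.id_N factors through a free module, r lifts to a null-homotopic
   endomorphism of any free resolution of N, so r kills every Ext^i(N, -).
   Conversely, if r kills Ext^1(N, N (+) R), applying this to the cocycle that
   projects the first syzygy of N onto syz yields q : R^n -> syz restricting to
   r on syz.  Then r.id_syz factors through R^n via q, and r.id_M lifts to
   r - q : R^n -> R^n, which vanishes on syz; so r.id_N factors through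
   R^n (+) R^n.  Hence the two annihilators of N agree, i.e. N lies in E(R). *)

From HB Require Import structures.
From mathcomp Require Import all_boot all_order all_algebra.
From Stdlib Require Import ClassicalEpsilon.
Set Implicit Arguments. Unset Strict Implicit. Unset Printing Implicit Defensive.
Import GRing.Theory.
Local Open Scope ring_scope.

Lemma dependent_choice_nat (T : nat -> Type) (P : forall j, T j -> Prop)
    (Q : forall j, T j -> T j.+1 -> Prop) :
  (exists x, P 0%N x) ->
  (forall j x, P j x -> exists y, P j.+1 y /\ Q j x y) ->
  exists f : forall j, T j, forall j, Q j (f j) (f j.+1).
Proof.
move=> /constructive_indefinite_description[x0 Px0] step.
pose T' j := {x : T j | P j x}.
have step' j (x : T' j) : {y : T' j.+1 | Q j (sval x) (sval y)}.
  apply: constructive_indefinite_description.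
  by have [y [Py Qxy]] := step j _ (svalP x); exists (exist _ y Py).
pose f := fix f j : T' j :=
  if j is j'.+1 then sval (step' j' (f j')) else exist _ x0 Px0.
by exists (fun j => sval (f j)) => j; exact: svalP (step' j (f j)).
Qed.

Lemma row_mulmx_inj (R : nzRingType) m n (A B : 'M[R]_(m, n)) :
  (forall v : 'rV[R]_m, v *m A = v *m B) -> A = B.
Proof. by move=> eqAB; apply/row_matrixP => i; rewrite !rowE eqAB. Qed.

Lemma free_lift (R : comNzRingType) (X : lmodType R) m q
    (f : {linear 'rV[R]_m -> X}) (g : {linear 'rV[R]_q -> X}) :
  (forall v, exists w, g w = f v) ->
  exists S : 'M[R]_(m, q), forall v, g (v *m S) = f v.
Proof.
move=> fg; have [u gu] := fin_all_exists (fun i : 'I_m => fg (delta_mx 0 i)).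
exists (\matrix_i u i) => v.
rewrite mulmx_sum_row linear_sum [v in RHS]row_sum_delta linear_sum.
by apply: eq_bigr => i _; rewrite rowK !linearZ gu.
Qed.

Section FreeResolution.
Variables (R : comNzRingType) (X : lmodType R) (n : nat -> nat).
Variables (D : forall j, 'M[R]_(n j.+1, n j)) (e : {linear 'rV[R]_(n 0) -> X}).
Hypothesis resD : free_resolution D e.

Lemma free_resolution_mulmxD j : D j.+1 *m D j = 0.
Proof.
case: resD => _ _ exactD; apply: row_mulmx_inj => v.
by rewrite mulmx0 mulmxA; apply/exactD; exists v.
Qed.

Lemma free_resolution_augD w : e (w *m D 0%N) = 0.
Proof. by case: resD => _ exact0 _; apply/exact0; exists w. Qed.

Lemma free_resolution_lift0 p (A : 'M[R]_(p, n 0%N)) :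
  (forall v, e (v *m A) = 0) -> exists B, A = B *m D 0%N.
Proof.
case: resD => _ exact0 _ eA.
have [|B eB] := @free_lift _ _ _ _ (mulmxr A) (mulmxr (D 0%N)).
  by move=> v; have [w eqw] := (exact0 _).1 (eA v); exists w; rewrite /= eqw.
by exists B; apply: row_mulmx_inj => v; rewrite mulmxA; exact: (esym (eB v)).
Qed.

Lemma free_resolution_lift j p (A : 'M[R]_(p, n j.+1)) :
  A *m D j = 0 -> exists B, A = B *m D j.+1.
Proof.
case: resD => _ _ exactD AD.
have [|B eB] := @free_lift _ _ _ _ (mulmxr A) (mulmxr (D j.+1)).
  move=> v; have [|w eqw] := (exactD _ (v *m A)).1; last by exists w; rewrite /= eqw.
  by rewrite -mulmxA AD mulmx0.
by exists B; apply: row_mulmx_inj => v; rewrite mulmxA; exact: (esym (eB v)).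
Qed.

(* As [G0] kills the boundaries, the chain map equal to [r - G0] in degree 0
   and to [r] above lifts the zero map of [X]; it is therefore null-homotopic,
   the homotopy being built degree by degree from exactness. *)
Lemma scalar_null_homotopic (r : R) (G0 : 'M[R]_(n 0%N)) :
  (forall v, e (v *m G0) = r *: e v) -> D 0%N *m G0 = 0 ->
  exists S : forall j, 'M[R]_(n j, n j.+1),
    forall j, r%:M = S j.+1 *m D j.+1 + D j *m S j.
Proof.
move=> eG0 DG0.
pose Inv j (S : 'M[R]_(n j, n j.+1)) := (r%:M - D j *m S) *m D j = 0.
pose Next j (S : 'M[R]_(n j, n j.+1)) S' := S' *m D j.+1 = r%:M - D j *m S.
have [||S eS] := @dependent_choice_nat _ Inv Next.
- have [|S0 eS0] := @free_resolution_lift0 _ (r%:M - G0).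
    by move=> v; rewrite mulmxBr linearB /= eG0 mul_mx_scalar linearZ; exact: subrr.
  exists S0; rewrite /Inv mulmxBl -mulmxA -eS0.
  by rewrite mulmxBr DG0 subr0 mul_scalar_mx mul_mx_scalar subrr.
- move=> j S IS; have [S' eS'] := free_resolution_lift IS.
  exists S'; split; last by rewrite /Next eS'.
  rewrite /Inv mulmxBl -mulmxA -eS' mulmxBr mul_scalar_mx mul_mx_scalar.
  by rewrite mulmxA free_resolution_mulmxD mul0mx subr0 subrr.
by exists S => j; rewrite eS subrK.
Qed.

End FreeResolution.

Lemma Ext_ann_of_factor (R : comNzRingType) (N X : lmodType R) (r : R) k
    (a : {linear N -> 'rV[R]_k}) (b : {linear 'rV[R]_k -> N}) :
  (forall x, r *: x = b (a x)) -> forall j, Ext_ann N X j r.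
Proof.
move=> rab j n D e resD phi cocycle.
have [e_surj _ _] := resD.
have [B eB] := @free_lift _ _ _ _ b e (fun v => e_surj (b v)).
have [||S homS] := scalar_null_homotopic resD (r := r) (G0 := lin1_mx (a \o e) *m B).
- by move=> v; rewrite mulmxA mul_rV_lin1 eB rab.
- apply: row_mulmx_inj => w.
  by rewrite mulmx0 !mulmxA mul_rV_lin1 /= free_resolution_augD // linear0 mul0mx.
exists (phi \o mulmxr (S j)) => v /=.
by rewrite -linearZ /= -mul_mx_scalar homS mulmxDr linearD /= mulmxA cocycle add0r mulmxA.
Qed.

Lemma stable_ann_Ext_ann (R : comNzRingType) (N X : lmodType R) (r : R) :
  stable_ann N r -> forall j, Ext_ann N X j r.
Proof. by move=> /(_ idfun)[k [a [b rab]]]; exact: Ext_ann_of_factor rab. Qed.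

Section LinearConstructions.
Variables (R : comNzRingType) (U A B : lmodType R).

Definition lin_comb k (f : 'I_k -> A) (v : 'rV[R]_k) : A := \sum_i v 0 i *: f i.
Fact lin_comb_is_linear k (f : 'I_k -> A) : linear (lin_comb f).
Proof.
move=> a u v; rewrite /lin_comb scaler_sumr -big_split; apply: eq_bigr => i _ /=.
by rewrite !mxE scalerDl scalerA.
Qed.
HB.instance Definition _ k (f : 'I_k -> A) :=
  GRing.isLinear.Build R 'rV[R]_k A _ (lin_comb f) (lin_comb_is_linear f).

Definition lpair (f : U -> A) (g : U -> B) (x : U) : (A * B)%type := (f x, g x).
Fact lpair_is_linear (f : {linear U -> A}) (g : {linear U -> B}) :
  linear (lpair f g).
Proof. by move=> a x y; rewrite /lpair !linearP. Qed.
HB.instance Definition _ (f : {linear U -> A}) (g : {linear U -> B}) :=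
  GRing.isLinear.Build R U (A * B)%type _ (lpair f g) (lpair_is_linear f g).

Definition lrow p q (f : U -> 'rV[R]_p) (g : U -> 'rV[R]_q) (x : U) :
  'rV[R]_(p + q) := row_mx (f x) (g x).
Fact lrow_is_linear p q (f : {linear U -> 'rV[R]_p}) (g : {linear U -> 'rV[R]_q}) :
  linear (lrow f g).
Proof. by move=> a x y; rewrite /lrow !linearP /= scale_row_mx add_row_mx. Qed.
HB.instance Definition _ p q (f : {linear U -> 'rV[R]_p}) (g : {linear U -> 'rV[R]_q}) :=
  GRing.isLinear.Build R U 'rV[R]_(p + q) _ (lrow f g) (lrow_is_linear f g).

End LinearConstructions.

Lemma mod_fingen_surj (R : comNzRingType) (X : lmodType R) k
    (e : {linear 'rV[R]_k -> X}) :
  (forall y, exists v, e v = y) -> mod_fingen X.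
Proof.
move=> e_surj; exists [seq e (delta_mx 0 j) | j <- enum 'I_k] => x.
have [v <-] := e_surj x.
pose r := [seq (v 0 j, e (delta_mx 0 j)) | j <- enum 'I_k].
have -> : [seq e (delta_mx 0 j) | j <- enum 'I_k] = map snd r by rewrite /r -map_comp.
exists (fun i => (nth (0, 0) r i).1).
have -> : \sum_(i < size (map snd r)) (nth (0, 0) r i).1 *: (map snd r)`_i =
          \sum_(p <- r) p.1 *: p.2.
  rewrite (big_nth (0, 0)) big_mkord size_map; apply: eq_bigr => i _.
  by rewrite (nth_map (0, 0)).
rewrite big_map big_enum /= [v in LHS]row_sum_delta linear_sum.
by apply: eq_bigr => j _; rewrite linearZ.
Qed.

Section Kernel.
Variables (R : comNzRingType) (M : lmodType R) (m : nat).
Variable e : {linear 'rV[R]_m -> M}.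

Definition ker_pred : {pred 'rV[R]_m} := fun x => e x == 0.
Fact ker_pred_closed : submod_closed ker_pred.
Proof.
split; first by rewrite unfold_in /= linear0.
by move=> a u v; rewrite !unfold_in /= linearP => /eqP-> /eqP->; rewrite scaler0 addr0.
Qed.
HB.instance Definition _ :=
  GRing.isSubmodClosed.Build R 'rV[R]_m ker_pred ker_pred_closed.

Inductive kermod : predArgType := KerMod x & x \in ker_pred.
Definition kerval (y : kermod) : 'rV[R]_m := let: KerMod x _ := y in x.
HB.instance Definition _ := [isSub of kermod for kerval].
HB.instance Definition _ := [Choice of kermod by <:].
HB.instance Definition _ := [SubChoice_isSubZmodule of kermod by <:].
HB.instance Definition _ := [SubZmodule_isSubLmodule of kermod by <:].
Fact kerval_is_linear : linear kerval. Proof. by []. Qed.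
HB.instance Definition _ :=
  GRing.isLinear.Build R kermod 'rV[R]_m _ kerval kerval_is_linear.

Lemma kervalK (y : kermod) : e (kerval y) = 0.
Proof. by case: y => x /=; rewrite unfold_in => /eqP. Qed.

End Kernel.

Section SurjectiveFactor.
Variables (R : comNzRingType) (F M Y : lmodType R).
Variables (e : {linear F -> M}) (h : {linear F -> Y}).
Hypothesis e_surj : forall y, exists z, e z = y.
Hypothesis ker_e_h : forall z, e z = 0 -> h z = 0.

Definition surj_section (y : M) : F :=
  proj1_sig (constructive_indefinite_description _ (e_surj y)).
Lemma surj_sectionK y : e (surj_section y) = y.
Proof. exact: proj2_sig (constructive_indefinite_description _ (e_surj y)). Qed.

(* Mentioning [ker_e_h] makes the linearity instance below depend on it. *)
Definition surj_factor (y : M) : Y := let _ := ker_e_h in h (surj_section y).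
Lemma surj_factorE z : surj_factor (e z) = h z.
Proof.
apply/eqP; rewrite -subr_eq0 -linearB; apply/eqP; apply: ker_e_h.
by rewrite linearB /= surj_sectionK subrr.
Qed.
Fact surj_factor_is_linear : linear surj_factor.
Proof.
move=> a x y; have := surj_factorE (a *: surj_section x + surj_section y).
by rewrite linearP /= !surj_sectionK => ->; rewrite linearP.
Qed.
HB.instance Definition _ :=
  GRing.isLinear.Build R M Y _ surj_factor surj_factor_is_linear.

End SurjectiveFactor.

Lemma lin_factor_surj (R : comNzRingType) (F M Y : lmodType R)
    (e : {linear F -> M}) (h : {linear F -> Y}) :
  (forall y, exists z, e z = y) -> (forall z, e z = 0 -> h z = 0) ->
  exists hb : {linear M -> Y}, forall z, hb (e z) = h z.
Proof. by move=> e_surj ker_e_h; exists (surj_factor e_surj ker_e_h); exact: surj_factorE. Qed.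

Section RowSubmodules.
Variable R : comNzRingType.

Definition row_submod m (P : 'rV[R]_m -> Prop) :=
  [/\ P 0, (forall x y, P x -> P y -> P (x + y)) & (forall c x, P x -> P (c *: x))].

Lemma row_submod_mulmx m k (P : 'rV[R]_m -> Prop) (A : 'M[R]_(k, m)) :
  row_submod P -> (forall i, P (row i A)) -> forall w, P (w *m A).
Proof.
case=> P0 PD PZ PA w; rewrite mulmx_sum_row.
by elim/big_ind: _ => // i _; apply: PZ.
Qed.

Lemma ker_row_submod (X : lmodType R) m (e : {linear 'rV[R]_m -> X}) :
  row_submod (fun v => e v = 0).
Proof.
split; first by rewrite linear0.
- by move=> x y ex ey; rewrite linearD /= ex ey addr0.
- by move=> c x ex; rewrite linearZ /= ex scaler0.
Qed.

Hypothesis noethR : noetherian_ring R.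

(* The first coordinates of the elements of [P] form a finitely generated ideal. *)
Lemma row_submod_lead_gens m (P : 'rV[R]_(1 + m) -> Prop) :
  row_submod P ->
  exists k (V : 'M[R]_(k, 1 + m)), (forall i, P (row i V)) /\
    forall v, P v -> exists c : 'rV[R]_k, lsubmx v = lsubmx (c *m V).
Proof.
case=> P0 PD PZ; pose i0 : 'I_(1 + m) := lshift m ord0.
pose I x := exists v, P v /\ v 0 i0 = x.
have [|s gens_s] := noethR (I := I); first split.
- by exists 0; rewrite mxE.
- move=> _ _ [v [Pv <-]] [u [Pu <-]]; exists (v + u); split; first exact: PD.
  by rewrite mxE.
- by move=> c _ [v [Pv <-]]; exists (c *: v); split; [exact: PZ | rewrite mxE].
have Is (i : 'I_(size s)) : I s`_i.
  apply/gens_s; exists (fun j => (j == i)%:R).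
  by rewrite (bigD1 i) //= eqxx mul1r big1 ?addr0 // => j /negbTE->; rewrite mul0r.
have [V PV] := fin_all_exists Is.
exists (size s), (\matrix_i V i); split=> [i|v Pv]; first by rewrite rowK; case: (PV i).
have [c ec] := (gens_s (v 0 i0)).1 (ex_intro _ v (conj Pv erefl)).
exists (\row_i c i); apply/rowP => j; rewrite (ord1 j) !mxE ec.
by apply: eq_bigr => i _; rewrite !mxE; case: (PV i) => _ ->.
Qed.

Lemma noetherian_row_submod m (P : 'rV[R]_m -> Prop) :
  row_submod P -> exists k (G : 'M[R]_(k, m)), forall v, P v <-> exists w, v = w *m G.
Proof.
elim: m P => [|m IHm] P subP.
  exists 0%N, 0 => v; split=> [_|_]; first by exists 0; apply/rowP => -[].
  by rewrite thinmx0; case: subP.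
have [P0 PD PZ] := subP.
have [k [V [PV leadV]]] := row_submod_lead_gens (m := m) subP.
pose P' (u : 'rV[R]_m) := P (row_mx (0 : 'rV[R]_1) u).
have [|k' [G PG]] := IHm P'; first split; rewrite /P'.
- by rewrite row_mx0.
- by move=> x y Px Py; rewrite -[0 : 'rV_1]addr0 -add_row_mx; apply: PD.
- by move=> c x Px; rewrite -(scaler0 _ c) -scale_row_mx; apply: PZ.
exists (k + k')%N, (col_mx V (row_mx 0 G)) => v; split=> [Pv|[w ->]].
- have [c ec] := leadV v Pv.
  pose u : 'rV[R]_(1 + m) := v - c *m V.
  have Pu : P u.
    by apply: PD => //; rewrite -scaleN1r; apply: PZ; exact: row_submod_mulmx.
  have u0 : lsubmx u = 0 by rewrite linearB /= ec subrr.
  have [w ew] : exists w, rsubmx u = w *m G by apply/PG; rewrite /P' -u0 hsubmxK.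
  exists (row_mx c w); rewrite mul_row_col.
  change (v = c *m V + @mulmx R 1 k' (1 + m) w (row_mx 0 G)).
  by rewrite mul_mx_row mulmx0 -ew -u0 hsubmxK addrC subrK.
- apply: row_submod_mulmx => // i; rewrite -[i]splitK; case: (split i) => j /=.
    by rewrite rowKu.
  rewrite rowKd; change (P (@row _ k' (1 + m) j (row_mx 0 G))).
  rewrite row_row_mx row0.
  by apply/(PG (row j G)).2; exists (delta_mx 0 j); rewrite rowE.
Qed.

Definition ker_gens (X : lmodType R) m (e : {linear 'rV[R]_m -> X}) :
    {k : nat & 'M[R]_(k, m)} :=
  let gens := constructive_indefinite_description _
    (noetherian_row_submod (ker_row_submod e)) in
  existT _ (sval gens) (sval (constructive_indefinite_description _ (svalP gens))).

Lemma ker_gensP (X : lmodType R) m (e : {linear 'rV[R]_m -> X}) v :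
  e v = 0 <-> exists w, v = w *m projT2 (ker_gens e).
Proof.
rewrite /ker_gens /=; set gens := constructive_indefinite_description _ _.
exact: (svalP (constructive_indefinite_description _ (svalP gens))).
Qed.

Section Resolution.
Variables (X : lmodType R) (m : nat) (e : {linear 'rV[R]_m -> X}).

Fixpoint res_step j : {a : nat & {b : nat & 'M[R]_(b, a)}} :=
  if j is j'.+1 then
    existT _ (projT1 (projT2 (res_step j')))
      (ker_gens (mulmxr (projT2 (projT2 (res_step j')))))
  else existT _ m (ker_gens e).

Definition res_dim j := projT1 (res_step j).
Definition res_mx j : 'M[R]_(res_dim j.+1, res_dim j) := projT2 (projT2 (res_step j)).

Lemma free_resolution_res : (forall y, exists v, e v = y) -> free_resolution res_mx e.
Proof.
move=> e_surj; split=> //.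
- move=> v; exact: ker_gensP.
- move=> j v; exact: (ker_gensP (mulmxr (res_mx j)) v).
Qed.

End Resolution.
End RowSubmodules.

Section Syzygy.
Variables (R : comNzRingType) (M : lmodType R) (n0 : nat).
Variable eM : {linear 'rV[R]_n0 -> M}.
Hypothesis eM_surj : forall y, exists v, eM v = y.

Local Notation syz := (kermod eM).

Lemma stable_ann_syz_sum (r : R) (q : {linear 'rV[R]_n0 -> syz}) :
  (forall y, q (kerval y) = r *: y) -> stable_ann (M * syz)%type r.
Proof.
move=> qK.
have [|hb hbE] := lin_factor_surj (h := mulmxr r%:M \- (@kerval _ _ _ eM \o q)) eM_surj.
  move=> z ez; have kerz : z \in ker_pred eM by rewrite unfold_in ez.
  by rewrite /= (qK (KerMod kerz)) linearZ /= mul_mx_scalar scalerN subrr.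
have eM_hb x : eM (hb x) = r *: x.
  have [z <-] := eM_surj x.
  by rewrite hbE /= linearB /= kervalK subr0 mul_mx_scalar linearZ.
move=> f; exists (n0 + n0)%N.
exists (lrow (hb \o fst) (@kerval _ _ _ eM \o snd)).
exists (f \o lpair (eM \o @lsubmx R 1 n0 n0) (q \o @rsubmx R 1 n0 n0)).
case=> x y; rewrite /= /lrow /lpair /= row_mxKl row_mxKr eM_hb qK.
by rewrite -linearZ.
Qed.

Hypothesis noethR : noetherian_ring R.

Let k1 := projT1 (ker_gens noethR eM).
Let syz_gens : 'M[R]_(k1, n0) := projT2 (ker_gens noethR eM).

Lemma row_syz_gens i : row i syz_gens \in ker_pred eM.
Proof. by rewrite unfold_in; apply/eqP/ker_gensP; exists (delta_mx 0 i); rewrite rowE. Qed.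

Definition syz_cover : {linear 'rV[R]_k1 -> syz} :=
  lin_comb (fun i => KerMod (row_syz_gens i)).

Lemma syz_coverE w : kerval (syz_cover w) = w *m syz_gens.
Proof.
rewrite /= /lin_comb linear_sum mulmx_sum_row.
by apply: eq_bigr => i _; rewrite linearZ.
Qed.

Lemma syz_cover_surj (y : syz) : exists w, syz_cover w = y.
Proof.
have [w ew] := (ker_gensP noethR eM (kerval y)).1 (kervalK y).
by exists w; apply: val_inj; rewrite /= syz_coverE ew.
Qed.

Definition syz_sum_cover : {linear 'rV[R]_(n0 + k1) -> (M * syz)%type} :=
  lpair (eM \o @lsubmx R 1 n0 k1) (syz_cover \o @rsubmx R 1 n0 k1).

Lemma syz_sum_cover_surj y : exists v, syz_sum_cover v = y.
Proof.
case: y => x y; have [v <-] := eM_surj x; have [w <-] := syz_cover_surj y.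
by exists (row_mx v w); rewrite /= /lpair /= row_mxKl row_mxKr.
Qed.

Lemma syz_retraction (r : R) :
  Ext_ann (M * syz)%type ((M * syz) * R^o)%type 0 r ->
  exists q : {linear 'rV[R]_n0 -> syz}, forall y, q (kerval y) = r *: y.
Proof.
move=> annE.
have resD := free_resolution_res noethR syz_sum_cover_surj.
pose D := res_mx noethR syz_sum_cover.
have [L eL] : exists L, forall v, v *m L *m syz_gens = @lsubmx R 1 n0 k1 (v *m D 0%N).
  have [|L eL] := @free_lift _ _ _ _ (@lsubmx R 1 n0 k1 \o mulmxr (D 0%N)) (mulmxr syz_gens).
    move=> v; have [|w ew] := (ker_gensP noethR eM (lsubmx (v *m D 0%N))).1.
      by have [] := free_resolution_augD resD v.
    by exists w; rewrite /= ew.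
  by exists L.
(* [phi] is the 1-cocycle v |-> syz-component of [v *m D 0], with values in
   the summand [syz] of [N (+) R]. *)
pose phi := lpair (lpair (\0 : _ -> M) (syz_cover \o mulmxr L)) (\0 : _ -> R^o).
have [w|psi epsi] := annE _ _ _ resD phi.
  rewrite /= /lpair /=; congr (_, _); congr (_, _); apply: val_inj.
  rewrite /= syz_coverE eL -mulmxA (free_resolution_mulmxD resD) mulmx0.
  by apply/rowP => i; rewrite !mxE.
exists (snd \o fst \o psi \o mulmxr (row_mx 1%:M 0 : 'M[R]_(n0, n0 + k1))) => y.
have [_ exact0 _] := resD.
have [v ev] : exists v, row_mx (kerval y) 0 = v *m D 0%N.
  by apply/exact0; rewrite /= /lpair /= row_mxKl row_mxKr kervalK linear0.
have syz_v : syz_cover (v *m L) = y.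
  by apply: val_inj; rewrite /= syz_coverE eL -ev row_mxKl.
by rewrite /= mul_mx_row mulmx1 mulmx0 ev -epsi /= syz_v.
Qed.

Lemma fingen_syz_sum : mod_fingen (M * syz)%type.
Proof. exact: mod_fingen_surj syz_sum_cover_surj. Qed.

Lemma syz_sum_in_E : in_E (M * syz)%type.
Proof.
move=> r; split=> [stab_r j | /(_ 0%N) /syz_retraction [q qK]].
- exact: stable_ann_Ext_ann.
- exact: stable_ann_syz_sum qK.
Qed.

End Syzygy.

Theorem mainTheorem17 (R : comNzRingType) :
  noetherian_ring R -> local_ring R ->
  forall M : lmodType R, mod_fingen M ->
    exists N : lmodType R, [/\ mod_fingen N, in_E N & is_summand M N].
Proof.
move=> noethR _ M [s gens_s].
pose eM : {linear 'rV[R]_(size s) -> M} := lin_comb (fun i : 'I_(size s) => s`_i).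
have eM_surj y : exists v, eM v = y.
  have [c ->] := gens_s y; exists (\row_i c i).
  by rewrite /= /lin_comb; apply: eq_bigr => i _; rewrite mxE.
exists (M * kermod eM)%type; split.
- exact: fingen_syz_sum.
- exact: syz_sum_in_E.
- by exists (lpair idfun \0), fst.
Qed.
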